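(* Let $(A,\mathfrak{m}_A)$ be a complete Noetherian local domain. Assume $A$ has a $\delta$-structure such that $\mathfrak{m}_A$ is generated by elements $p,x_1,\dots,x_n$ with $\delta(x_i)\in\mathfrak{m}_A$ for all $i$. Then for an ideal $I\subseteq A$ the following are equivalent: (1) $(A,I)$ is an orientable prism; (2) $I$ is generated by a distinguished element $d\in\mathfrak{m}_A$; (3) $I$ is generated by $p-f$ for some $f\in(x_1,\dots,x_n)$.
   Context: All rings are commutative $\mathbb{Z}_{(p)}$-algebras. A $\delta$-structure is $\delta:A\to A$ with $\delta(0)=\delta(1)=0$, $\delta(a+b)=\delta(a)+\delta(b)+\frac{a^p+b^p-(a+b)^p}{p}$, $\delta(ab)=a^p\delta(b)+b^p\delta(a)+p\delta(a)\delta(b)$, Frobenius lift $\varphi(a)=a^p+p\delta(a)$; $d$ is distinguished if $\delta(d)$ is a unit. A prism is a pair $(A,I)$ with $I$ locally free of rank one, $A$ derived $(p,I)$-complete and $p\in I+\varphi(I)A$; it is orientable if $I$ is principal. *)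

From HB Require Import structures.
From mathcomp Require Import all_boot all_order all_algebra.
Set Implicit Arguments. Unset Strict Implicit. Unset Printing Implicit Defensive.
Import Order.TTheory GRing.Theory Num.Theory.
Local Open Scope ring_scope.

Section Defs.
Variable A : comUnitRingType.

Definition is_ideal (I : A -> Prop) : Prop :=
  [/\ I 0, (forall x y, I x -> I y -> I (x + y)) & (forall a x, I x -> I (a * x))].

Definition same_set (I J : A -> Prop) : Prop := forall y, I y <-> J y.

Definition ideal_gen (k : nat) (g : 'I_k -> A) : A -> Prop :=
  fun y => exists c : 'I_k -> A, y = \sum_(i < k) c i * g i.

Definition ideal_span (S : A -> Prop) : A -> Prop :=
  fun y => exists k (c g : 'I_k -> A), (forall i, S (g i)) /\ y = \sum_(i < k) c i * g i.

Definition principal_ideal (d : A) : A -> Prop := ideal_span (fun y => y = d).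

(* family (a, g_0, ..., g_{n-1}) *)
Definition cons_gen (n : nat) (a : A) (g : 'I_n -> A) : 'I_n.+1 -> A :=
  fun i => match unlift ord0 i with Some j => g j | None => a end.

Definition ideal_mul (I J : A -> Prop) : A -> Prop :=
  ideal_span (fun y => exists a b, I a /\ J b /\ y = a * b).

Fixpoint ideal_pow (I : A -> Prop) (k : nat) : A -> Prop :=
  match k with 0 => (fun _ => True) | k'.+1 => ideal_mul (ideal_pow I k') I end.

Definition is_maximal_ideal (M : A -> Prop) : Prop :=
  [/\ is_ideal M, ~ M 1 &
      forall J, is_ideal J -> (forall y, M y -> J y) -> J 1 \/ same_set J M].

Definition is_local_with (m : A -> Prop) : Prop :=
  is_maximal_ideal m /\ forall M, is_maximal_ideal M -> same_set M m.

Definition noetherian : Prop :=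
  forall J, is_ideal J -> exists k (g : 'I_k -> A), same_set J (ideal_gen g).

(* m-adically complete and separated: A -> lim A/m^k is bijective *)
Definition adically_complete (m : A -> Prop) : Prop :=
  (forall a : nat -> A, (forall k, ideal_pow m k (a k.+1 - a k)) ->
      exists x, forall k, ideal_pow m k (x - a k)) /\
  (forall x, (forall k, ideal_pow m k x) -> x = 0).

(* Z_(p)-algebra: all primes other than p are invertible *)
Definition Zp_local_algebra (p : nat) : Prop :=
  forall l : nat, prime l -> l != p -> (l%:R : A) \is a GRing.unit.

(* (a^p + b^p - (a+b)^p)/p written with integral coefficients *)
Definition delta_add_term (p : nat) (a b : A) : A :=
  - \sum_(1 <= i < p) ('C(p, i) %/ p)%:R * a ^+ i * b ^+ (p - i).

Definition is_delta_structure (p : nat) (delta : A -> A) : Prop :=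
  [/\ delta 0 = 0, delta 1 = 0,
      (forall a b, delta (a + b) = delta a + delta b + delta_add_term p a b) &
      (forall a b, delta (a * b) =
          a ^+ p * delta b + b ^+ p * delta a + p%:R * delta a * delta b)].

Definition frob (p : nat) (delta : A -> A) (a : A) : A := a ^+ p + p%:R * delta a.

Definition distinguished (delta : A -> A) (d : A) : Prop :=
  delta d \is a GRing.unit.

(* Derived completeness of the module A w.r.t. an ideal J (Stacks 091S):
   for every f in J, T(A,f) = Rlim(... -f-> A -f-> A) = 0, i.e. lim = R^1 lim = 0,
   i.e. the map prod_k A -> prod_k A, (s_k) |-> (s_k - f s_{k+1}) is bijective. *)
Definition derived_complete (J : A -> Prop) : Prop :=
  forall f, J f ->
    (forall t : nat -> A, exists s : nat -> A, forall k, s k - f * s k.+1 = t k) /\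
    (forall s s' : nat -> A, (forall k, s k - f * s k.+1 = s' k - f * s' k.+1) ->
        forall k, s k = s' k).

(* I is locally free of rank one: there are f_1..f_r generating the unit ideal
   such that each localisation I_{f_i} is free of rank one over A_{f_i}, with
   basis g_i/1 (g_i in I); written out in terms of elements of A. *)
Definition locally_free_rank_one (I : A -> Prop) : Prop :=
  exists r (f : 'I_r -> A), ideal_gen f 1 /\
    forall i, exists g, I g /\
      (forall y, I y -> exists N a, f i ^+ N * y = a * g) /\
      (forall a, (exists N, f i ^+ N * (a * g) = 0) -> exists M, f i ^+ M * a = 0).

Definition is_prism (p : nat) (delta : A -> A) (I : A -> Prop) : Prop :=
  [/\ is_ideal I, locally_free_rank_one I,
      derived_complete (ideal_span (fun y => y = p%:R \/ I y)) &
      exists i j, I i /\ ideal_span (fun y => exists z, I z /\ y = frob p delta z) j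
                  /\ p%:R = i + j].

Definition is_orientable_prism (p : nat) (delta : A -> A) (I : A -> Prop) : Prop :=
  is_prism p delta I /\ exists d, same_set I (principal_ideal d).

End Defs.

From mathcomp Require Import all_boot all_order all_algebra.
From mathcomp Require Import ring zify.
From Stdlib Require Import Classical ClassicalEpsilon.
Import GRing.Theory.

Set Implicit Arguments.
Unset Strict Implicit.
Unset Printing Implicit Defensive.

(* Everything is read off modulo the maximal ideal m.  Since A is m-adically
   complete and local, every element outside m is a unit, and
   delta p = 1 - p^(p-1) is one.  On the ideal (x_1, ..., x_n) both g and
   delta g lie in m, and delta(a b) lies in m whenever a, b do.  Hence for
   d = b p + g in m, delta d = b^p delta p modulo m, so d is distinguished
   iff b is a unit, i.e. iff (d) = (p - f) with f = - g / b.
   If (A, (d)) is a prism, derived completeness rules out a unit d, and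
   writing p = c d + b phi(d) shows that delta d in m would make d divide p
   and then put delta p = delta (d e) in m.  Conversely, for distinguished d,
   p = (phi(d) - d^p) / delta d, and (p, d) is derived complete because it
   lies in m. *)

Definition binom_quot (p j : nat) : nat := \sum_(1 <= i < p) ('C(p, i) %/ p) * j ^ i.

Definition frob_quot (p k : nat) : nat := \sum_(0 <= j < k) binom_quot p j.

Section FrobQuotient.
Variable p : nat.
Hypothesis p_prime : prime p.

Lemma binom_quotE j : p * binom_quot p j + j ^ p + 1 = (j + 1) ^ p.
Proof.
have p_gt0 := prime_gt0 p_prime.
rewrite [j + 1]addnC expnDn.
rewrite -(big_mkord xpredT (fun i => 'C(p, i) * (1 ^ (p - i) * j ^ i))).
rewrite big_nat_recr //= big_ltn //= bin0 binn subnn !exp1n !mul1n expn0.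
rewrite -addnA [j ^ p + 1]addnC addnA (addnC 1) big_distrr /=; congr (_ + _ + _).
apply: eq_big_nat => i /andP[i_gt0 i_lt_p].
rewrite exp1n mul1n mulnA [p * _]mulnC divnK //.
by apply: prime_dvd_bin; rewrite // i_gt0 i_lt_p.
Qed.

Lemma frob_quotE k : p * frob_quot p k + k = k ^ p.
Proof.
elim: k => [|k IHk]; first by rewrite /frob_quot big_geq // muln0 exp0n // prime_gt0.
rewrite /frob_quot big_nat_recr //= mulnDr -[k.+1]addn1 -binom_quotE -IHk /frob_quot.
lia.
Qed.

Lemma frob_quot_p : (frob_quot p p).+1 = p ^ p.-1.
Proof.
have p_gt0 := prime_gt0 p_prime.
apply/eqP; rewrite -(eqn_pmul2l p_gt0) -expnS prednK // -frob_quotE.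
by rewrite mulnS addnC.
Qed.

End FrobQuotient.

Local Open Scope ring_scope.

Section Ideals.
Variable A : comUnitRingType.

Section IdealClosure.
Variable J : A -> Prop.
Hypothesis J_ideal : is_ideal J.

Lemma ideal0 : J 0.
Proof. by case: J_ideal. Qed.

Lemma idealD x y : J x -> J y -> J (x + y).
Proof. by case: J_ideal => _ + _; apply. Qed.

Lemma idealMl a x : J x -> J (a * x).
Proof. by case: J_ideal => _ _; apply. Qed.

Lemma idealMr a x : J x -> J (x * a).
Proof. by rewrite mulrC; apply: idealMl. Qed.

Lemma idealN x : J x -> J (- x).
Proof. by rewrite -mulN1r; apply: idealMl. Qed.

Lemma ideal_sum k (F : 'I_k -> A) : (forall i, J (F i)) -> J (\sum_(i < k) F i).
Proof. by move=> JF; apply: (big_ind J) => //; [exact: ideal0 | exact: idealD]. Qed.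

Lemma ideal_span_sub (S : A -> Prop) :
  (forall y, S y -> J y) -> forall y, ideal_span S y -> J y.
Proof.
by move=> SJ y [k [c [g [Sg ->]]]]; apply: ideal_sum => i; apply/idealMl/SJ.
Qed.

End IdealClosure.

Lemma is_ideal_span (S : A -> Prop) : is_ideal (ideal_span S).
Proof.
split.
- by exists 0%N, (fun _ => 0), (fun _ => 0); split; [case | rewrite big_ord0].
- move=> y z [k1 [c1 [g1 [S1 ->]]]] [k2 [c2 [g2 [S2 ->]]]].
  pose glue (h1 : 'I_k1 -> A) (h2 : 'I_k2 -> A) i :=
    match split i with inl a => h1 a | inr b => h2 b end.
  exists (k1 + k2)%N, (glue c1 c2), (glue g1 g2); split.
  + by move=> i; rewrite /glue; case: (split i).
  + rewrite big_split_ord /glue; congr (_ + _); apply: eq_bigr => i _.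
    * by rewrite (unsplitK (inl _ i)).
    * by rewrite (unsplitK (inr _ i)).
- move=> a y [k [c [g [Sg ->]]]]; exists k, (fun i => a * c i), g; split => //.
  by rewrite mulr_sumr; apply: eq_bigr => i _; rewrite mulrA.
Qed.

Lemma ideal_span_mem (S : A -> Prop) y : S y -> ideal_span S y.
Proof.
by move=> Sy; exists 1%N, (fun _ => 1), (fun _ => y); rewrite big_ord1 mul1r.
Qed.

Lemma is_ideal_gen k (g : 'I_k -> A) : is_ideal (ideal_gen g).
Proof.
split.
- by exists (fun _ => 0); rewrite big1 // => i _; rewrite mul0r.
- move=> y z [c1 ->] [c2 ->]; exists (fun i => c1 i + c2 i).
  by rewrite -big_split; apply: eq_bigr => i _; rewrite mulrDl.
- move=> a y [c ->]; exists (fun i => a * c i).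
  by rewrite mulr_sumr; apply: eq_bigr => i _; rewrite mulrA.
Qed.

Lemma ideal_gen_mem k (g : 'I_k -> A) i : ideal_gen g (g i).
Proof.
exists (fun j => (j == i)%:R).
by rewrite (bigD1 i) //= eqxx mul1r big1 ?addr0 // => j /negbTE ->; rewrite mul0r.
Qed.

Lemma cons_gen0 n (a : A) (g : 'I_n -> A) : cons_gen a g ord0 = a.
Proof. by rewrite /cons_gen unlift_none. Qed.

Lemma cons_genS n (a : A) (g : 'I_n -> A) j : cons_gen a g (lift ord0 j) = g j.
Proof. by rewrite /cons_gen liftK. Qed.

Lemma ideal_gen_cons n (a : A) (g : 'I_n -> A) y :
  ideal_gen (cons_gen a g) y -> exists b f, ideal_gen g f /\ y = b * a + f.
Proof.
move=> [c ->]; rewrite big_ord_recl cons_gen0.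
exists (c ord0), (\sum_(i < n) c (lift ord0 i) * g i); split.
  by exists (fun i => c (lift ord0 i)).
by congr (_ + _); apply: eq_bigr => i _; rewrite cons_genS.
Qed.

Lemma principal_idealP (d y : A) : principal_ideal d y <-> exists c, y = c * d.
Proof.
split.
- move=> [k [c [g [gd ->]]]]; exists (\sum_(i < k) c i).
  by rewrite mulr_suml; apply: eq_bigr => i _; rewrite gd.
- by move=> [c ->]; apply: idealMl; [exact: is_ideal_span | exact: ideal_span_mem].
Qed.

Lemma principal_ideal_refl (d : A) : principal_ideal d d.
Proof. exact: ideal_span_mem. Qed.

Lemma principal_ideal_assoc (u d : A) :
  u \is a GRing.unit -> same_set (principal_ideal (u * d)) (principal_ideal d).
Proof.
move=> u_unit y; rewrite !principal_idealP; split=> -[c ->].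
- by exists (c * u); rewrite mulrA.
- by exists (c / u); rewrite mulrA divrK.
Qed.

Lemma locally_free_principal (I : A -> Prop) (d : A) :
  GRing.lreg d -> same_set I (principal_ideal d) -> locally_free_rank_one I.
Proof.
move=> d_reg Id; exists 1%N, (fun _ => 1); split.
  by exists (fun _ => 1); rewrite big_ord1 mulr1.
move=> _; exists d; split; first by apply/Id/principal_idealP; exists 1; rewrite mul1r.
split.
- by move=> y /Id /principal_idealP [c ->]; exists 0%N, c; rewrite expr0 mul1r.
- move=> a [N]; rewrite expr1n mul1r => ad0.
  by exists 0%N; rewrite expr0 mul1r; apply: d_reg; rewrite mulr0 mulrC.
Qed.

Lemma derived_complete_nonunit (J : A -> Prop) (u : A) :
  derived_complete J -> J u -> u \isn't a GRing.unit.
Proof.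
move=> J_complete Ju; apply/negP => u_unit.
have uV_sol k : u^-1 ^+ k - u * u^-1 ^+ k.+1 = 0 - u * 0.
  by rewrite exprS mulrA divrr // mul1r subrr mulr0 subrr.
have := (J_complete u Ju).2 _ _ uV_sol 0%N.
by rewrite expr0 => /eqP; rewrite oner_eq0.
Qed.

Lemma is_ideal_pow (m : A -> Prop) k : is_ideal (ideal_pow m k).
Proof. by case: k => [|k] /=; [split | exact: is_ideal_span]. Qed.

Lemma ideal_pow_succ (m : A -> Prop) k y : ideal_pow m k.+1 y -> ideal_pow m k y.
Proof.
apply: ideal_span_sub; first exact: is_ideal_pow.
by move=> _ [a [b [ma [_ ->]]]]; apply: (idealMr (is_ideal_pow m k)).
Qed.

Lemma ideal_pow_exp (m : A -> Prop) f k : m f -> ideal_pow m k (f ^+ k).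
Proof.
move=> mf; elim: k => [|k IHk] //=; rewrite exprSr; apply: ideal_span_mem.
by exists (f ^+ k), f.
Qed.

Section AdicCompleteness.
Variable m : A -> Prop.
Hypothesis m_complete : adically_complete m.

Lemma adic_unit1B a : m a -> (1 - a) \is a GRing.unit.
Proof.
move=> ma; pose geom k := \sum_(i < k) a ^+ i.
have [x geom_x] : exists x, forall k, ideal_pow m k (x - geom k).
  apply: m_complete.1 => k; rewrite /geom big_ord_recr /= addrAC subrr add0r.
  exact: ideal_pow_exp.
apply/unitrPr; exists x; apply/eqP; rewrite -subr_eq0; apply/eqP.
apply: m_complete.2 => k.
have -> : (1 - a) * x - 1 = (1 - a) * (x - geom k) - a ^+ k.
  have geomE : (1 - a) * geom k = 1 - a ^+ k by rewrite -opprB mulNr -subrX1 opprB.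
  by rewrite mulrBr geomE; ring.
apply: (idealD (is_ideal_pow m k)).
  exact: (idealMl (is_ideal_pow m k) _ (geom_x k)).
exact: (idealN (is_ideal_pow m k) (ideal_pow_exp _ ma)).
Qed.

Section GeometricEquation.
Variable f : A.
Hypothesis m_f : m f.

Lemma adic_geom_sol (t : nat -> A) :
  exists s : nat -> A, forall k, s k - f * s k.+1 = t k.
Proof.
pose a k N := \sum_(j < N) f ^+ j * t (k + j)%N.
have [s s_lim] : exists s : nat -> A, forall k N, ideal_pow m N (s k - a k N).
  apply: (choice (fun k x => forall N, ideal_pow m N (x - a k N))) => k.
  apply: m_complete.1 => N; rewrite /a big_ord_recr /= addrAC subrr add0r.
  exact: (idealMr (is_ideal_pow m N) _ (ideal_pow_exp _ m_f)).
exists s => k; apply/eqP; rewrite -subr_eq0; apply/eqP; apply: m_complete.2 => N.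
have a_rec : a k N.+1 = t k + f * a k.+1 N.
  rewrite /a big_ord_recl /= expr0 mul1r addn0 mulr_sumr; congr (_ + _).
  by apply: eq_bigr => j _; rewrite exprS mulrA addSnnS.
have -> : s k - f * s k.+1 - t k = (s k - a k N.+1) - f * (s k.+1 - a k.+1 N).
  by rewrite a_rec; ring.
apply: (idealD (is_ideal_pow m N)); first exact: ideal_pow_succ.
exact: (idealN (is_ideal_pow m N) (idealMl (is_ideal_pow m N) _ (s_lim _ _))).
Qed.

Lemma adic_geom_uniq (s s' : nat -> A) :
  (forall k, s k - f * s k.+1 = s' k - f * s' k.+1) -> forall k, s k = s' k.
Proof.
move=> ss' k; pose u k := s k - s' k.
have u_rec N : u k = f ^+ N * u (k + N)%N.
  elim: N => [|N IHN]; first by rewrite expr0 mul1r addn0.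
  rewrite IHN addnS exprSr -mulrA; congr (_ * _).
  by move: (ss' (k + N)%N); rewrite /u => /eqP; rewrite subr_eq => /eqP ->; ring.
apply/eqP; rewrite -subr_eq0; apply/eqP; apply: m_complete.2 => N.
rewrite -/(u k) (u_rec N) mulrC.
exact: (idealMl (is_ideal_pow m N) _ (ideal_pow_exp _ m_f)).
Qed.

End GeometricEquation.

Lemma derived_complete_sub (J : A -> Prop) :
  (forall y, J y -> m y) -> derived_complete J.
Proof.
by move=> Jm f /Jm m_f; split; [exact: adic_geom_sol | exact: adic_geom_uniq].
Qed.

End AdicCompleteness.

Section Local.
Variable m : A -> Prop.
Hypothesis m_local : is_local_with m.

Lemma local_ideal : is_ideal m.
Proof. by case: m_local => -[]. Qed.

Lemma local_unit_nonmem u : u \is a GRing.unit -> ~ m u.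
Proof.
case: m_local => -[_ m_proper _] _ u_unit mu; apply: m_proper.
by rewrite -(mulVr u_unit); exact: (idealMl local_ideal _ mu).
Qed.

Lemma local_nonmem_unit u : adically_complete m -> ~ m u -> u \is a GRing.unit.
Proof.
case: m_local => -[m_ideal _ m_max] _ m_complete mu.
pose J y := exists a b, m a /\ y = a + b * u.
have J_ideal : is_ideal J.
  split.
  - by exists 0, 0; rewrite mul0r addr0; split => //; exact: ideal0.
  - move=> _ _ [a1 [b1 [ma1 ->]]] [a2 [b2 [ma2 ->]]]; exists (a1 + a2), (b1 + b2).
    by split; [exact: idealD | ring].
  - move=> c _ [a [b [ma ->]]]; exists (c * a), (c * b).
    by split; [exact: idealMl | ring].
have mJ y : m y -> J y by exists y, 0; rewrite mul0r addr0.
case: (m_max J J_ideal mJ) => [[a [b [ma e]]] | Jm].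
- have bu_unit : b * u \is a GRing.unit.
    have -> : b * u = 1 - a by rewrite e; ring.
    exact: (adic_unit1B m_complete ma).
  by move: bu_unit; rewrite unitrM => /andP[].
- by case: mu; apply/Jm; exists 0, 1; rewrite mul1r add0r; split => //; exact: ideal0.
Qed.

End Local.

End Ideals.

Section DeltaRing.
Variables (A : comUnitRingType) (p : nat) (delta : A -> A).
Hypothesis delta_struct : is_delta_structure p delta.

Lemma frobM a b : frob p delta (a * b) = frob p delta a * frob p delta b.
Proof. by case: delta_struct => _ _ _ dM; rewrite /frob dM exprMn; ring. Qed.

Lemma distinguished_neq0 d : distinguished delta d -> d != 0.
Proof.
case: delta_struct => d0 _ _ _; apply: contraTneq => ->.
by rewrite /distinguished d0 unitr0.
Qed.

Lemma delta_natr k : delta k%:R = - (frob_quot p k)%:R.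
Proof.
case: delta_struct => d0 d1 dD _; elim: k => [|k IHk].
  by rewrite /frob_quot big_geq // d0 oppr0.
rewrite [frob_quot _ _]/frob_quot big_nat_recr //= -/(frob_quot p k).
rewrite -addn1 !natrD dD IHk d1 addr0 opprD; congr (_ + _).
rewrite /delta_add_term /binom_quot natr_sum; congr (- _); apply: eq_bigr => i _.
by rewrite expr1n mulr1 natrM natrX.
Qed.

Lemma delta_p : prime p -> delta p%:R = 1 - p%:R ^+ p.-1.
Proof.
by move=> p_prime; rewrite delta_natr -natrX -(frob_quot_p p_prime) mulrS; ring.
Qed.

Lemma delta_add_term_mem (J : A -> Prop) u v :
  is_ideal J -> J u -> J (delta_add_term p u v).
Proof.
move=> J_ideal Ju; apply: (idealN J_ideal); rewrite big_nat_cond.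
apply: (big_ind J) => [|y z|i /andP[/andP[i_gt0 _] _]].
- exact: ideal0.
- exact: idealD.
rewrite (_ : _ * u ^+ i * _ = ('C(p, i) %/ p)%:R * u ^+ i.-1 * v ^+ (p - i) * u).
  exact: (idealMl J_ideal).
by rewrite -[in u ^+ i](prednK i_gt0) exprSr; ring.
Qed.

Section PositiveExponent.
Hypothesis p_gt0 : (0 < p)%N.

Lemma delta_mul_mem_l (J : A -> Prop) a b :
  is_ideal J -> J a -> J (delta a) -> J (delta (a * b)).
Proof.
case: delta_struct => _ _ _ dM J_ideal Ja Jda; rewrite dM.
apply: (idealD J_ideal); first apply: (idealD J_ideal).
- by rewrite -(prednK p_gt0) exprS -mulrA; exact: (idealMr J_ideal).
- exact: (idealMl J_ideal).
- by rewrite mulrAC; exact: (idealMl J_ideal).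
Qed.

Lemma delta_mul_mem (J : A -> Prop) a b :
  is_ideal J -> J p%:R -> J a -> J b -> J (delta (a * b)).
Proof.
case: delta_struct => _ _ _ dM J_ideal Jp Ja Jb; rewrite dM.
apply: (idealD J_ideal); first apply: (idealD J_ideal).
- by rewrite -(prednK p_gt0) exprS -mulrA; exact: (idealMr J_ideal).
- by rewrite -(prednK p_gt0) exprS -mulrA; exact: (idealMr J_ideal).
- by rewrite -mulrA; exact: (idealMr J_ideal).
Qed.

Definition delta_core (J : A -> Prop) : A -> Prop := fun a => J a /\ J (delta a).

Lemma is_ideal_delta_core (J : A -> Prop) : is_ideal J -> is_ideal (delta_core J).
Proof.
case: delta_struct => d0 _ dD _ J_ideal; split.
- by rewrite /delta_core d0; split; exact: ideal0.
- move=> a b [Ja Jda] [Jb Jdb]; split; first exact: idealD.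
  by rewrite dD; apply: (idealD J_ideal); [exact: idealD | exact: delta_add_term_mem].
- move=> c a [Ja Jda]; split; first exact: idealMl.
  by rewrite mulrC; exact: delta_mul_mem_l.
Qed.

Lemma distinguished_frob_decomp d : distinguished delta d ->
  p%:R = - ((delta d)^-1 * d ^+ p.-1) * d + (delta d)^-1 * frob p delta d.
Proof.
move=> dd; have dp : d ^+ p = d ^+ p.-1 * d by rewrite -exprSr prednK.
transitivity ((delta d)^-1 * delta d * p%:R); first by rewrite mulVr ?mul1r.
by rewrite /frob dp; ring.
Qed.

End PositiveExponent.

Lemma frob_span_principal (I : A -> Prop) d y :
  same_set I (principal_ideal d) ->
  ideal_span (fun z => exists w, I w /\ z = frob p delta w) y ->
  exists b, y = b * frob p delta d.
Proof.
move=> Id Sy; apply/principal_idealP; move: Sy; apply: (ideal_span_sub (is_ideal_span _)).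
move=> _ [w [/Id /principal_idealP [c ->] ->]]; apply/principal_idealP.
by exists (frob p delta c); exact: frobM.
Qed.

End DeltaRing.

Section LocalPrism.
Variables (A : comUnitRingType) (p : nat) (delta : A -> A) (m : A -> Prop).
Hypotheses (p_prime : prime p) (delta_struct : is_delta_structure p delta).
Hypotheses (m_local : is_local_with m) (m_complete : adically_complete m).
Hypothesis m_p : m p%:R.

Let m_ideal : is_ideal m := local_ideal m_local.
Let p_gt0 : (0 < p)%N := prime_gt0 p_prime.

Lemma delta_p_nonmem y : m y -> ~ m (delta p%:R + y).
Proof.
move=> my mdy; apply: (local_unit_nonmem m_local (unitr1 A)).
have pred_p_gt0 : (0 < p.-1)%N by rewrite -ltnS prednK // prime_gt1.
have -> : 1 = delta p%:R + y + (p%:R ^+ p.-1 - y) by rewrite delta_p //; ring.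
apply: (idealD m_ideal mdy); apply: (idealD m_ideal); last exact: (idealN m_ideal).
by rewrite -(prednK pred_p_gt0) exprS; exact: (idealMr m_ideal).
Qed.

Lemma prism_principal_mem I d :
  is_prism p delta I -> same_set I (principal_ideal d) -> m d.
Proof.
move=> [_ _ I_complete _] Id; apply: NNPP => nmd.
have Jd : ideal_span (fun y => y = p%:R \/ I y) d.
  by apply: ideal_span_mem; right; apply/Id/principal_ideal_refl.
case/negP: (derived_complete_nonunit I_complete Jd).
exact: (local_nonmem_unit m_local m_complete nmd).
Qed.

Lemma prism_principal_distinguished I d :
  is_prism p delta I -> same_set I (principal_ideal d) -> distinguished delta d.
Proof.
move=> prism Id; have md := prism_principal_mem prism Id.
case: prism => _ _ _ [i [j [/Id /principal_idealP [c ->] []]]].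
move=> /(frob_span_principal delta_struct Id) [b ->] p_decomp.
apply: (local_nonmem_unit m_local m_complete) => mdd.
have u_unit : (1 - b * delta d) \is a GRing.unit.
  by apply: (adic_unit1B m_complete); exact: (idealMl m_ideal).
have dp : d ^+ p = d * d ^+ p.-1 by rewrite -exprS prednK.
have p_dvd : p%:R = d * ((c + b * d ^+ p.-1) / (1 - b * delta d)).
  rewrite mulrA; apply: (canRL (mulrK u_unit)).
  by rewrite mulrBr mulr1 {1}p_decomp /frob dp; ring.
apply: (delta_p_nonmem (ideal0 m_ideal)); rewrite addr0 p_dvd.
exact: (delta_mul_mem_l delta_struct p_gt0 _ m_ideal md mdd).
Qed.

Lemma distinguished_is_prism I d :
  is_ideal I -> GRing.lreg d -> m d -> distinguished delta d ->
  same_set I (principal_ideal d) -> is_prism p delta I.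
Proof.
move=> I_ideal d_reg md dd Id; split => //.
- exact: locally_free_principal d_reg Id.
- apply: (derived_complete_sub m_complete); apply: (ideal_span_sub m_ideal).
  by move=> y [-> // | /Id /principal_idealP [c ->]]; exact: (idealMl m_ideal).
- exists (- ((delta d)^-1 * d ^+ p.-1) * d), ((delta d)^-1 * frob p delta d).
  split; first by apply/Id/principal_idealP; eexists.
  split; last exact: (distinguished_frob_decomp p_gt0 dd).
  apply: (idealMl (is_ideal_span _)); apply: ideal_span_mem.
  by exists d; split => //; apply/Id/principal_ideal_refl.
Qed.

Section Generators.
Variables (n : nat) (x : 'I_n -> A).
Hypothesis m_sub_gen : forall y, m y -> ideal_gen (cons_gen p%:R x) y.
Hypotheses (m_x : forall i, m (x i)) (m_delta_x : forall i, m (delta (x i))).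

Lemma ideal_gen_delta_core f : ideal_gen x f -> delta_core delta m f.
Proof.
move=> [c ->]; have core_ideal := is_ideal_delta_core delta_struct p_gt0 m_ideal.
by apply: (ideal_sum core_ideal) => i; apply: (idealMl core_ideal); split.
Qed.

Lemma distinguished_assoc_p_sub d : m d -> distinguished delta d ->
  exists2 f, ideal_gen x f & exists2 u, u \is a GRing.unit & d = u * (p%:R - f).
Proof.
move=> md dd; have [b [g [gg d_decomp]]] := ideal_gen_cons (m_sub_gen md).
have [_ m_dg] := ideal_gen_delta_core gg.
have b_unit : b \is a GRing.unit.
  apply: (local_nonmem_unit m_local m_complete) => mb.
  apply: (local_unit_nonmem m_local dd); case: delta_struct => _ _ dD _.
  have mbp : m (b * p%:R) by exact: (idealMr m_ideal).
  rewrite d_decomp dD; apply: (idealD m_ideal); first apply: (idealD m_ideal) => //.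
  - exact: (delta_mul_mem delta_struct p_gt0 m_ideal m_p mb m_p).
  - exact: (delta_add_term_mem p _ m_ideal mbp).
exists (- (b^-1 * g)).
  exact: (idealN (is_ideal_gen x) (idealMl (is_ideal_gen x) _ gg)).
by exists b => //; rewrite d_decomp opprK mulrDr mulrA mulrV // mul1r mulrC.
Qed.

Lemma p_sub_distinguished f :
  ideal_gen x f -> m (p%:R - f) /\ distinguished delta (p%:R - f).
Proof.
move=> gf; have [m_f _] := ideal_gen_delta_core gf.
have [_ m_dNf] := ideal_gen_delta_core (idealN (is_ideal_gen x) gf).
split; first exact: (idealD m_ideal m_p (idealN m_ideal m_f)).
apply: (local_nonmem_unit m_local m_complete).
case: delta_struct => _ _ dD _; rewrite dD -addrA.
apply: delta_p_nonmem; apply: (idealD m_ideal m_dNf).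
exact: (delta_add_term_mem p _ m_ideal m_p).
Qed.

End Generators.

End LocalPrism.

Theorem lemma5p1 (A : idomainType) (p : nat) (delta : A -> A) (m : A -> Prop)
  (n : nat) (x : 'I_n -> A) :
  prime p ->
  Zp_local_algebra A p ->
  is_local_with m -> noetherian A -> adically_complete m ->
  is_delta_structure p delta ->
  same_set m (ideal_gen (cons_gen p%:R x)) ->
  (forall i, m (delta (x i))) ->
  forall I : A -> Prop, is_ideal I ->
    (is_orientable_prism p delta I <->
       exists d, [/\ m d, distinguished delta d & same_set I (principal_ideal d)]) /\
    ((exists d, [/\ m d, distinguished delta d & same_set I (principal_ideal d)]) <->
       exists f, ideal_gen x f /\ same_set I (principal_ideal (p%:R - f))).
Proof.
move=> p_prime _ m_local _ m_complete delta_struct m_gen m_delta_x I I_ideal.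
have m_p : m p%:R.
  by apply/m_gen; move: (ideal_gen_mem (cons_gen p%:R x) ord0); rewrite cons_gen0.
have m_x i : m (x i).
  apply/m_gen; move: (ideal_gen_mem (cons_gen p%:R x) (lift ord0 i)).
  by rewrite cons_genS.
have m_sub_gen y : m y -> ideal_gen (cons_gen p%:R x) y by move/m_gen.
split; split.
- move=> [prism [d Id]]; exists d; split => //.
  + exact: (prism_principal_mem m_local m_complete prism Id).
  + exact: (prism_principal_distinguished p_prime delta_struct m_local m_complete m_p
      prism Id).
- move=> [d [md dd Id]]; split; last by exists d.
  apply: (distinguished_is_prism p_prime m_local m_complete m_p I_ideal _ md dd Id).
  exact/mulfI/(distinguished_neq0 delta_struct).
- move=> [d [md dd Id]].
  have [f gf [u u_unit d_eq]] := distinguished_assoc_p_sub p_prime delta_struct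
    m_local m_complete m_p m_sub_gen m_x m_delta_x md dd.
  by exists f; split => // y; rewrite Id d_eq; exact: principal_ideal_assoc.
- move=> [f [gf If]]; exists (p%:R - f).
  have [md dd] := p_sub_distinguished p_prime delta_struct m_local m_complete m_p
    m_x m_delta_x gf.
  by split.
Qed.
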